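(* Let $X$ be a real Banach space with a normalized Schauder basis $\mathcal B=(e_n)_{n=1}^\infty$ with biorthogonal functionals $(e_n^* )$, and let $\mathcal E=(\varepsilon_n)_{n=1}^\infty$ be a sequence of nonnegative numbers such that the brick $K=K_{\mathcal B,\mathcal E}$ is compact. Then $r^{\rm ext}(K)$, $r^{\rm unc}(K)$ and $\sup_{x\in K}\|x\|$ are all finite and equal.
   Context: The brick is $K_{\mathcal B,\mathcal E}=\{x\in X:\ |e_n^*(x)|\le\varepsilon_n \text{ for all } n\}$. A point $x_0\in A$ is an extreme point of $A$ if for every nonzero $x\in X$ there is $\lambda\in[-1,1]$ with $x_0+\lambda x\notin A$. The extreme radius $r^{\rm ext}(K)$ is the supremum of $\|x_0\|$ over extreme points of $K$ if one exists, and $\infty$ otherwise. The unconditional radius is $r^{\rm unc}(K)=\sup_{\theta_n=\pm1}\|\sum_{n=1}^\infty\theta_n\varepsilon_ne_n\|$, with the norm of a divergent series equal to $\infty$. *)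

From HB Require Import structures.
From mathcomp Require Import all_boot all_order all_algebra.
From mathcomp Require Import all_classical all_reals all_analysis.
Set Implicit Arguments. Unset Strict Implicit. Unset Printing Implicit Defensive.
Import Order.TTheory GRing.Theory Num.Theory.
Import numFieldNormedType.Exports.
Local Open Scope classical_set_scope.
Local Open Scope ring_scope.

Section Brick.
Variables (R : realType) (X : completeNormedModType R).

Definition psum (a : nat -> R) (e : nat -> X) : nat -> X :=
  fun N => \sum_(0 <= n < N) a n *: e n.

(* (e_n) is a Schauder basis of X and es n = e_n^* are its coordinate
   (biorthogonal) functionals: every x is sum_n e_n^*(x) e_n, and the
   coefficients of such an expansion are unique. *)
Definition schauder_basis (e : nat -> X) (es : nat -> X -> R) : Prop :=
  (forall x : X, psum (fun n => es n x) e @ \oo --> x) /\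
  (forall (x : X) (a : nat -> R), psum a e @ \oo --> x ->
     forall n, a n = es n x).

Definition normalized (e : nat -> X) : Prop := forall n, `|e n| = 1.

Definition brick (es : nat -> X -> R) (eps : nat -> R) : set X :=
  [set x | forall n, `|es n x| <= eps n].

Definition extreme_point (A : set X) (x0 : X) : Prop :=
  A x0 /\ forall x : X, x != 0 ->
    exists lam : R, -1 <= lam <= 1 /\ ~ A (x0 + lam *: x).

Definition r_ext (A : set X) : \bar R :=
  if `[< exists x, extreme_point A x >]
  then ereal_sup [set (`|x|)%:E | x in extreme_point A]
  else +oo%E.

Definition series_norm (a : nat -> R) (e : nat -> X) : \bar R :=
  if `[< cvg (psum a e @ \oo) >] then (`|lim (psum a e @ \oo)|)%:E
  else +oo%E.

Definition is_sign_seq (theta : nat -> R) : Prop :=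
  forall n, theta n = 1 \/ theta n = -1.

Definition r_unc (e : nat -> X) (eps : nat -> R) : \bar R :=
  ereal_sup [set series_norm (fun n => theta n * eps n) e
            | theta in is_sign_seq].

Definition sup_norm (A : set X) : \bar R :=
  ereal_sup [set (`|x|)%:E | x in A].

End Brick.

From HB Require Import structures.
From mathcomp Require Import all_boot all_order all_algebra.
From mathcomp Require Import all_classical all_reals all_analysis.
From mathcomp Require Import ring lra.
Import Order.TTheory GRing.Theory Num.Theory.
Import numFieldNormedType.Exports.
Local Open Scope classical_set_scope.
Local Open Scope ring_scope.

(* The basis projections P_N are uniformly bounded: by Baire's theorem one of
   the closed sets {x | sup_N |P_N x| <= k} contains a ball, and a geometric
   series of corrections extends the bound to all of X.  Hence the coordinate
   functionals are continuous, and compactness of the brick K forces every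
   sign series sum_n theta_n eps_n e_n to converge: its partial sums lie in K
   and any cluster point has coordinates theta_n eps_n.  These sign sums are
   exactly the extreme points of K.  Conversely each finite sign sum is the
   midpoint of two sign sums, and every partial sum of a point of K is a convex
   combination of finite sign sums, so no point of K is longer than the
   longest sign sum.  The three radii are therefore the supremum of the norms
   of the sign sums, which is finite as K is bounded. *)

Lemma cvg0_near_lt {R : realType} {b : nat -> R} {eta : R} :
  b @ \oo --> 0 -> 0 < eta -> \forall I \near \oo, b I < eta.
Proof.
move=> b0 eta0; apply: filterS (cvgr_dist_lt _ _ b0 _ eta0) => I.
by rewrite sub0r normrN; exact: le_lt_trans (ler_norm _).
Qed.

Lemma cvg_cauchy_norm {R : realType} {V : completeNormedModType R} (u : nat -> V) :
  (forall eps, 0 < eps ->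
     exists N, forall m n, (N <= m)%N -> (N <= n)%N -> `|u m - u n| < eps) ->
  cvg (u @ \oo).
Proof.
move=> Cu; apply/cauchy_cvgP; apply: cauchy_exP => eps eps0.
have [N HN] := Cu eps eps0; exists (u N), N => // n /= Nn.
by rewrite -ball_normE /ball_ /=; exact: HN.
Qed.

Lemma cvg_tail_bound {R : realType} {V : completeNormedModType R}
    {u : nat -> V} {b : nat -> R} :
  b @ \oo --> 0 -> (forall I J, (I <= J)%N -> `|u J - u I| <= b I) ->
  cvg (u @ \oo).
Proof.
move=> b0 ub; apply: cvg_cauchy_norm => eps eps0.
have [N _ /(_ N (leqnn N)) bN] := cvg0_near_lt b0 (divr_gt0 eps0 (ltr0Sn R 1)).
exists N => m n Nm Nn.
rewrite -(subrK (u N) (u m)) -addrA (le_lt_trans (ler_normD _ _)) //.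
rewrite (splitr eps) ltrD // ?(le_lt_trans (ub _ _ Nm)) //.
by rewrite -opprB normrN (le_lt_trans (ub _ _ Nn)).
Qed.

Lemma unif_approx_cvg {R : realType} {V : completeNormedModType R}
    {v : nat -> V} {f : nat -> nat -> V} {L : nat -> V} {b : nat -> R} :
  b @ \oo --> 0 -> (forall I, f I @ \oo --> L I) ->
  (forall I N, `|v N - f I N| <= b I) ->
  exists2 l : V, v @ \oo --> l & L @ \oo --> l.
Proof.
move=> b0 fL vf.
have /cvg_ex [l /= vl] : cvg (v @ \oo).
  apply: cvg_cauchy_norm => eps eps0.
  have [I _ /(_ I (leqnn I)) bI] := cvg0_near_lt b0 (divr_gt0 eps0 (ltr0Sn R 2)).
  have [N _ HN] := cvgr_dist_lt _ _ (fL I) _ (divr_gt0 eps0 (ltr0Sn R 5)).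
  exists N => m n Nm Nn.
  have := ler_distD (f I m) (v m) (v n); have := ler_distD (L I) (f I m) (v n).
  have := ler_distD (f I n) (L I) (v n).
  have := HN m Nm; have := HN n Nn; have := vf I m; have := vf I n.
  rewrite [`|f I m - L I|]distrC [`|f I n - v n|]distrC.
  lra.
exists l => //; apply/cvgrPdist_lt => eps eps0.
near=> J; apply: le_lt_trans (_ : b J < eps); last by near: J; exact: (cvg0_near_lt b0).
apply: (@cvgr_to_le _ \oo _ R (fun N => `|v N - f J N|)).
  by apply: cvg_norm; apply: cvgB.
by near=> N; exact: vf.
Unshelve. all: by end_near. Qed.

Lemma sum_halfpow_le {R : realType} (I J : nat) : (I <= J)%N ->
  \sum_(I <= i < J) ((2 : R)^-1) ^+ i <= 2 * (2^-1) ^+ I.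
Proof.
have tail_eq k : \sum_(I <= i < I + k) ((2 : R)^-1) ^+ i + 2 * (2^-1) ^+ (I + k)
                 = 2 * (2^-1) ^+ I.
  elim: k => [|k IH]; first by rewrite addn0 big_geq ?add0r.
  rewrite addnS big_nat_recr /= ?leq_addr // -IH -addrA exprS.
  by congr (_ + _); set t := (_ ^+ _); field.
move=> IJ; rewrite -(subnKC IJ) -(tail_eq (J - I)%N) lerDl.
by rewrite mulr_ge0 // exprn_ge0 // invr_ge0.
Qed.

Lemma halfpow_cvg0 {R : realType} (A : R) :
  (fun I => A * ((2 : R)^-1) ^+ I) @ \oo --> 0.
Proof.
by apply: cvg_geometric; rewrite ger0_norm ?invr_ge0 // invf_lt1 // ltr1n.
Qed.

Lemma closure_dist_lt {R : realType} {V : normedModType R}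
    {A : set V} {y : V} {eta : R} :
  closure A y -> 0 < eta -> exists2 a, A a & `|y - a| < eta.
Proof.
move=> Ay eta0; have [a [Aa]] := Ay _ (nbhsx_ballx y _ eta0).
by rewrite -ball_normE /ball_ /= => ya; exists a.
Qed.

Lemma norm_le_scale_eq0 {R : realType} {C d : R} :
  0 <= C -> (forall eta, 0 < eta -> `|d| <= C * eta) -> d = 0.
Proof.
move=> C0 dsmall; apply/eqP; rewrite -normr_eq0 eq_le normr_ge0 andbT.
rewrite leNgt; apply/negP => d0.
have eta0 : 0 < `|d| / (2 * (C + 1)) by rewrite divr_gt0 // mulr_gt0 //; lra.
have := dsmall _ eta0; apply/negP; rewrite -ltNge.
rewrite mulrA ltr_pdivrMr; last by rewrite mulr_gt0 //; lra.
nra.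
Qed.

Lemma sign_seq_norm {R : realType} (b : nat -> R) :
  exists2 th, is_sign_seq th & forall n, th n * `|b n| = b n.
Proof.
exists (fun n => if b n < 0 then -1 else 1) => [n|n]; first by case: ifP; [right|left].
case: ifP => bn; first by rewrite ltr0_norm // mulN1r opprK.
by rewrite ger0_norm ?mul1r // leNgt bn.
Qed.

Section SchauderBasis.
Variables (R : realType) (X : completeNormedModType R).
Variables (e : nat -> X) (es : nat -> X -> R).
Hypothesis es_expansion : forall x : X, psum (fun n => es n x) e @ \oo --> x.
Hypothesis es_unique : forall (x : X) (a : nat -> R),
  psum a e @ \oo --> x -> forall n, a n = es n x.

Lemma psumD a b N : psum (fun n => a n + b n) e N = psum a e N + psum b e N.
Proof. by rewrite /psum -big_split /=; apply: eq_bigr => i _; rewrite scalerDl. Qed.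

Lemma psumZ c a N : psum (fun n => c * a n) e N = c *: psum a e N.
Proof. by rewrite /psum scaler_sumr; apply: eq_bigr => i _; rewrite scalerA. Qed.

Lemma psum_eq_ge a M N : (M <= N)%N -> (forall n, (M <= n)%N -> a n = 0) ->
  psum a e N = psum a e M.
Proof.
move=> MN a0; rewrite /psum (@big_cat_nat _ _ _ M 0 N) //=.
rewrite [X in _ + X]big1_seq ?addr0 // => i /andP[_].
by rewrite mem_index_iota => /andP[Mi _]; rewrite a0 // scale0r.
Qed.

Lemma psum_cvg_pointwise (f : nat -> nat -> R) (a : nat -> R) N :
  (forall n, f n @ \oo --> a n) -> (fun I => psum (f^~ I) e N) @ \oo --> psum a e N.
Proof.
move=> fa; elim: N => [|N IH].
  by rewrite /psum big_geq //; under eq_fun do rewrite big_geq //; exact: cvg_cst.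
rewrite /psum big_nat_recr //=; under eq_fun do rewrite big_nat_recr //=.
by apply: cvgD => //; apply: cvgZ => //; exact: cvg_cst.
Qed.

Lemma coordD n x y : es n (x + y) = es n x + es n y.
Proof.
symmetry; apply: (es_unique _ (fun k => es k x + es k y)).
rewrite (_ : psum _ e = psum (fun k => es k x) e \+ psum (fun k => es k y) e).
  exact: cvgD.
by apply/funext => N; rewrite psumD.
Qed.

Lemma coordZ n c x : es n (c *: x) = c * es n x.
Proof.
symmetry; apply: (es_unique _ (fun k => c * es k x)).
rewrite (_ : psum _ e = fun N => c *: psum (fun k => es k x) e N).
  by apply: cvgZ => //; exact: cvg_cst.
by apply/funext => N; rewrite psumZ.
Qed.

Lemma coord0 n : es n 0 = 0.
Proof. by rewrite -(scale0r (0 : X)) coordZ mul0r. Qed.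

Lemma coordB n x y : es n (x - y) = es n x - es n y.
Proof. by rewrite coordD -scaleN1r coordZ mulN1r. Qed.

Lemma coord_psum a M n : es n (psum a e M) = if (n < M)%N then a n else 0.
Proof.
pose a' k := if (k < M)%N then a k else 0.
have -> : psum a e M = psum a' e M.
  by apply: eq_big_nat => i /andP[_ iM]; rewrite /a' iM.
rewrite -(es_unique _ a') //; apply: cvg_near_cst; near=> N.
apply: psum_eq_ge => [|k Mk]; last by rewrite /a' ltnNge Mk.
by near: N; exact: nbhs_infty_ge.
Unshelve. all: by end_near. Qed.

Lemma coord_basis m n : es m (e n) = (m == n)%:R.
Proof.
have -> : e n = psum (fun k => (k == n)%:R) e n.+1.
  rewrite /psum big_nat_recr //= eqxx scale1r big1_seq ?add0r // => i.
  by rewrite mem_index_iota => /andP[_ /ltn_eqF ->]; rewrite scale0r.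
rewrite coord_psum ltnS; case: leqP => // /gtn_eqF.
by rewrite eq_sym => ->.
Qed.

Lemma coord_eq0 x : (forall n, es n x = 0) -> x = 0.
Proof.
move=> x0; have := es_expansion x.
rewrite (_ : psum _ e = fun=> 0) => [x_lim|].
  exact: norm_cvg_unique x_lim (cvg_cst _).
by apply/funext => N; rewrite /psum big1 // => i _; rewrite x0 scale0r.
Qed.

Definition proj N x := psum (fun n => es n x) e N.

Lemma projD N x y : proj N (x + y) = proj N x + proj N y.
Proof. by rewrite /proj -psumD; apply: eq_bigr => i _; rewrite coordD. Qed.

Lemma projZ N c x : proj N (c *: x) = c *: proj N x.
Proof. by rewrite /proj -psumZ; apply: eq_bigr => i _; rewrite coordZ. Qed.

Lemma projB N x y : proj N (x - y) = proj N x - proj N y.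
Proof. by rewrite projD -scaleN1r projZ scaleN1r. Qed.

Lemma proj0 N : proj N 0 = 0.
Proof. by rewrite /proj /psum big1 // => i _; rewrite coord0 scale0r. Qed.

Lemma proj_sum N m k (f : nat -> X) :
  proj N (\sum_(m <= i < k) f i) = \sum_(m <= i < k) proj N (f i).
Proof. exact: (big_morph (proj N) (projD N) (proj0 N)). Qed.

Lemma proj_bounded x : exists c : R, forall N, `|proj N x| <= c.
Proof.
have /cvg_seq_bounded/ex_bound : cvgn (proj^~ x).
  by apply/cvg_ex; exists x; exact: es_expansion.
move=> /(_ (@globally_properfilter _ setT 0%N Logic.I)) [c cx].
by exists c => N; exact: cx.
Qed.

Hypothesis e_normalized : normalized e.

Lemma coord_le_proj n x c : (forall N, `|proj N x| <= c) -> `|es n x| <= 2 * c.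
Proof.
move=> xc; have : es n x *: e n = proj n.+1 x - proj n x.
  by rewrite /proj /psum big_nat_recr //= addrC addrK.
move/(congr1 (@Num.norm _ X)); rewrite normrZ e_normalized mulr1 => ->.
by rewrite (le_trans (ler_normB _ _)) // mulr2n mulrDl mul1r lerD.
Qed.

(* The coordinates are not yet known to be continuous, but the projection
   bounds make the coordinates of the partial sums Cauchy; the series built from
   their limits is uniformly close to the partial sums and is identified with z. *)
Lemma proj_series_bound (y : nat -> X) (A : R) (z : X) :
  (forall i N, `|proj N (y i)| <= A * (2^-1) ^+ i) ->
  (fun I => \sum_(0 <= i < I) y i) @ \oo --> z ->
  forall N, `|proj N z| <= 2 * A.
Proof.
move=> ybound wz; set w := fun I => \sum_(0 <= i < I) y i.
have A0 : 0 <= A.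
  by have := ybound 0%N 0%N; rewrite expr0 mulr1; exact: le_trans.
have w_tail I J N : (I <= J)%N ->
    `|proj N (w J) - proj N (w I)| <= 2 * A * (2^-1) ^+ I.
  move=> IJ; rewrite -projB /w (@big_cat_nat _ _ _ I 0 J) //= addrAC subrr add0r.
  rewrite proj_sum (le_trans (ler_norm_sum _ _ _)) //.
  rewrite (le_trans (ler_sum _ (fun i _ => ybound i N))) // -mulr_sumr.
  by rewrite -[2 * A * _]mulrA mulrCA ler_wpM2l ?sum_halfpow_le.
have coord_cvg n : cvg ((fun I => es n (w I)) @ \oo).
  apply: (cvg_tail_bound (halfpow_cvg0 (2 * (2 * A)))) => I J IJ.
  rewrite -coordB -mulrA -mulrA; apply: coord_le_proj => N.
  by rewrite projB mulrA; exact: w_tail.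
pose a n := lim ((fun I => es n (w I)) @ \oo).
have v_near I N : `|psum a e N - proj N (w I)| <= 2 * A * (2^-1) ^+ I.
  apply: (@cvgr_to_le _ \oo _ R (fun J => `|proj N (w J) - proj N (w I)|)).
    apply: cvg_norm; apply: cvgB; last exact: cvg_cst.
    exact: (psum_cvg_pointwise (fun n I => es n (w I)) a N coord_cvg).
  by near=> J; apply: w_tail; near: J; exact: nbhs_infty_ge.
have [l vl wl] := unif_approx_cvg (halfpow_cvg0 _)
  (fun I => es_expansion (w I)) v_near.
have a_coord n : a n = es n z.
  by rewrite (norm_cvg_unique wz wl); exact: es_unique.
move=> N; have -> : proj N z = psum a e N by apply: eq_bigr => n _; rewrite a_coord.
by have := v_near 0%N N; rewrite /w big_geq // proj0 subr0 expr0 mulr1.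
Unshelve. all: by end_near. Qed.

Lemma proj_level_ball : exists (k : nat) (x0 : X) (r : R),
  0 < r /\ ball x0 r `<=` closure [set y | forall N, `|proj N y| <= k%:R].
Proof.
pose C k := closure [set y | forall N, `|proj N y| <= k%:R].
have : ~ (forall k, open (~` C k) /\ dense (~` C k)).
  move=> Cdense; have := Baire Cdense.
  have -> : \bigcap_k ~` C k = set0.
    rewrite -subset0 => x Cx; have [c xc] := proj_bounded x.
    apply: (Cx (Num.truncn `|c|).+1 Logic.I); apply: subset_closure => N.
    by rewrite (le_trans (xc N)) // (le_trans (ler_norm c)) // ltW // truncnS_gt.
  by move=> /(_ setT (ex_intro _ 0 Logic.I) openT) [x [_ []]].
move=> /existsNP [k /not_andP [|]].
  by case; apply: closed_openC; exact: closed_closure.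
move=> /denseNE [U [[x /open_nbhs_nbhs /nbhs_ballP [r r0 xrU]] UC]].
exists k, x, r; split => // y /xrU Uy; apply: contrapT => Cy.
by have : (U `&` ~` C k) y by []; rewrite UC.
Qed.

Lemma proj_approx_small : exists c r : R, [/\ 0 <= c, 0 < r &
  forall z eta, `|z| < r -> 0 < eta ->
    exists2 y, (forall N, `|proj N y| <= c) & `|z - y| < eta].
Proof.
have [k [x0 [r [r0 level]]]] := proj_level_ball.
exists (2 * k%:R), r; split => // z eta zr eta0.
have eta2 : 0 < eta / 2 by rewrite divr_gt0.
have [y1 y1k d1] : exists2 y1, (forall N, `|proj N y1| <= k%:R) &
    `|x0 + z - y1| < eta / 2.
  apply: closure_dist_lt eta2; apply: level.
  by rewrite -ball_normE /ball_ /= opprD addrA subrr add0r normrN.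
have [y2 y2k d2] := closure_dist_lt (level _ (ballxx x0 r0)) eta2.
exists (y1 - y2) => [N|].
  by rewrite projB (le_trans (ler_normB _ _)) // mulr2n mulrDl mul1r lerD.
have -> : z - (y1 - y2) = (x0 + z - y1) - (x0 - y2).
  by rewrite !opprB [RHS]addrC !addrA subrK [z + y2]addrC.
by rewrite (le_lt_trans (ler_normB _ _)) //; lra.
Qed.

Lemma proj_approx : exists2 C : R, 0 <= C & forall z eta, 0 < eta ->
  exists2 y, (forall N, `|proj N y| <= C * `|z|) & `|z - y| < eta.
Proof.
have [c [r [c0 r0 small]]] := proj_approx_small.
exists (2 * c / r) => [|z eta eta0]; first by rewrite divr_ge0 ?mulr_ge0 // ltW.
have [->|z0] := eqVneq z 0.
  by exists 0 => [N|]; rewrite ?proj0 ?normr0 ?mulr0 ?subr0 ?normr0.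
have nz : 0 < `|z| by rewrite normr_gt0.
pose s := r / (2 * `|z|).
have s0 : 0 < s by rewrite divr_gt0 // mulr_gt0.
have zr : `|s *: z| < r.
  have -> : `|s *: z| = r / 2 by rewrite normrZ gtr0_norm // /s; field; rewrite gt_eqF.
  lra.
have [y yc zy] := small (s *: z) (eta * s) zr (mulr_gt0 eta0 s0).
exists (s^-1 *: y) => [N|].
  rewrite projZ normrZ gtr0_norm ?invr_gt0 //.
  have -> : 2 * c / r * `|z| = s^-1 * c by rewrite /s invf_div; field; rewrite gt_eqF.
  by rewrite ler_pM2l ?invr_gt0.
have -> : z - s^-1 *: y = s^-1 *: (s *: z - y).
  by rewrite scalerBr scalerA mulVf ?gt_eqF // scale1r.
by rewrite normrZ gtr0_norm ?invr_gt0 // ltr_pdivrMl // mulrC.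
Qed.

Lemma proj_uniform_bound :
  exists2 C : R, 0 <= C & forall x N, `|proj N x| <= C * `|x|.
Proof.
have [C C0 approx] := proj_approx.
exists (2 * C) => [|z N]; first by rewrite mulr_ge0.
have [->|z0] := eqVneq z 0; first by rewrite proj0 !normr0 mulr0.
have nz : 0 < `|z| by rewrite normr_gt0.
have eta_pos i : 0 < `|z| * (2^-1) ^+ i by rewrite mulr_gt0 // exprn_gt0 // invr_gt0.
have step (p : nat * X) : exists y, (forall N, `|proj N y| <= C * `|p.2|) /\
    `|p.2 - y| < `|z| * (2^-1) ^+ p.1.+1.
  by have [y ? ?] := approx p.2 _ (eta_pos p.1.+1); exists y.
have [f fP] := choice step.
(* Approximate the successive remainders [rest i] of z; the approximants [y i]
   then sum to z with geometrically decreasing projection bounds. *)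
pose fix rest i := if i is j.+1 then rest j - f (j, rest j) else z.
pose y i := f (i, rest i).
have rest_le i : `|rest i| <= `|z| * (2^-1) ^+ i.
  case: i => [|i] /=; first by rewrite expr0 mulr1.
  by apply: ltW; exact: (fP (i, rest i)).2.
have y_bound i M : `|proj M (y i)| <= C * `|z| * (2^-1) ^+ i.
  rewrite -mulrA; apply: le_trans ((fP (i, rest i)).1 M) _.
  by apply: ler_wpM2l => //; exact: rest_le.
have y_partial I : \sum_(0 <= i < I) y i = z - rest I.
  elim: I => [|I IH]; first by rewrite big_geq // subrr.
  by rewrite big_nat_recr //= IH opprB addrA addrAC.
have y_sum : (fun I => \sum_(0 <= i < I) y i) @ \oo --> z.
  apply/cvgrPdist_lt => eps eps0; near=> I.
  rewrite y_partial opprB addrC subrK (le_lt_trans (rest_le I)) //.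
  by near: I; exact: cvg0_near_lt (halfpow_cvg0 _) eps0.
by rewrite -mulrA; exact: (proj_series_bound _ _ _ y_bound y_sum N).
Unshelve. all: by end_near. Qed.

Lemma coord_lipschitz :
  exists2 C : R, 0 <= C & forall n x, `|es n x| <= C * `|x|.
Proof.
have [C C0 projC] := proj_uniform_bound.
exists (2 * C) => [|n x]; first by rewrite mulr_ge0.
by rewrite -mulrA; apply: coord_le_proj => N; exact: projC.
Qed.

Variable eps : nat -> R.
Hypothesis eps_ge0 : forall n, 0 <= eps n.
Hypothesis brick_compact : compact (brick es eps).

Lemma norm_sign_mul th n : is_sign_seq th -> `|th n * eps n| = eps n.
Proof. by move=> /(_ n) [->|->]; rewrite ?mul1r ?mulN1r ?normrN ger0_norm. Qed.

Lemma psum_sign_brick th N : is_sign_seq th ->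
  brick es eps (psum (fun n => th n * eps n) e N).
Proof.
move=> th_sign n; rewrite coord_psum; case: ifP => _; first by rewrite norm_sign_mul.
by rewrite normr0.
Qed.

Lemma psum_sign_cvg th : is_sign_seq th ->
  cvg (psum (fun n => th n * eps n) e @ \oo).
Proof.
move=> th_sign; set S := psum _ e.
have [C C0 coordC] := coord_lipschitz.
have S_brick : (S @ \oo) (brick es eps).
  by exists 0%N => // N _; exact: psum_sign_brick.
have [x [_ Sx]] := brick_compact _ _ S_brick.
have x_coord n : es n x = th n * eps n.
  apply/eqP; rewrite -subr_eq0; apply/eqP.
  apply: (norm_le_scale_eq0 C0) => eta eta0.
  have S_tail : (S @ \oo) (S @` [set M | (n < M)%N]).
    by exists n.+1 => // M nM; exists M.
  have [_ [[M nM <-]]] := Sx _ _ S_tail (nbhsx_ballx x _ eta0).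
  rewrite -ball_normE /ball_ /= => xSM.
  rewrite -[th n * eps n](_ : es n (S M) = _); last by rewrite coord_psum nM.
  by rewrite -coordB (le_trans (coordC _ _)) // ler_wpM2l // ltW.
apply/cvg_ex; exists x; rewrite (_ : S = proj^~ x); first exact: es_expansion.
by apply/funext => N; apply: eq_bigr => n _; rewrite x_coord.
Qed.

Definition sign_sum th := lim (psum (fun n => th n * eps n) e @ \oo).

Lemma psum_sign_sum th : is_sign_seq th ->
  psum (fun n => th n * eps n) e @ \oo --> sign_sum th.
Proof. exact: psum_sign_cvg. Qed.

Lemma coord_sign_sum th n : is_sign_seq th -> es n (sign_sum th) = th n * eps n.
Proof. by move=> /psum_sign_sum /es_unique ->. Qed.

Lemma sign_sum_brick th : is_sign_seq th -> brick es eps (sign_sum th).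
Proof. by move=> th_sign n; rewrite coord_sign_sum // norm_sign_mul. Qed.

Lemma series_norm_sign th : is_sign_seq th ->
  series_norm (fun n => th n * eps n) e = (`|sign_sum th|)%:E.
Proof. by move=> /psum_sign_cvg S_cvg; rewrite /series_norm asboolT. Qed.

Lemma sign_sum_extreme th : is_sign_seq th ->
  extreme_point (brick es eps) (sign_sum th).
Proof.
move=> th_sign; split=> [|w w0]; first exact: sign_sum_brick.
have [n wn] : exists n, es n w != 0.
  apply: contrapT => none; move/eqP: w0; apply; apply: coord_eq0 => n.
  by apply/eqP; apply: contrapT => wn; apply: none; exists n; apply/negP.
have th_norm : `|th n| = 1 by case: (th_sign n) => ->; rewrite ?normrN normr1.
have thn2 : th n * th n = 1 by case: (th_sign n) => ->; rewrite ?mulrNN mulr1.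
pose t := th n * es n w.
have t0 : t != 0 by rewrite mulf_neq0 // -normr_eq0 th_norm oner_neq0.
exists (Num.sg t); split; first by rewrite -ler_norml normr_sg t0.
move=> /(_ n); rewrite coordD coordZ coord_sign_sum //.
have -> : `|th n * eps n + Num.sg t * es n w| = eps n + `|t|.
  rewrite -[LHS]mul1r -th_norm -normrM mulrDr !mulrA thn2 mul1r.
  rewrite [th n * _]mulrC -mulrA -/t.
  by rewrite -normrEsg ger0_norm // addr_ge0.
by apply/negP; rewrite -ltNge ltrDl normr_gt0.
Qed.

Lemma extreme_coord_norm x n : extreme_point (brick es eps) x -> `|es n x| = eps n.
Proof.
move=> [x_brick x_ext]; apply/eqP; rewrite eq_le x_brick /= leNgt; apply/negP => lt.
pose d := eps n - `|es n x|.
have d0 : 0 < d by rewrite subr_gt0.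
have de0 : d *: e n != 0.
  by rewrite -normr_eq0 normrZ e_normalized mulr1 gtr0_norm // gt_eqF.
have [lam [lam1 /(_ _) out]] := x_ext _ de0; apply: out => m.
rewrite coordD !coordZ coord_basis; case: eqVneq => [->|_] /=; last first.
  by rewrite !mulr0 addr0; exact: x_brick.
have lam_d : `|lam| * d <= d by apply: ler_piMl; [exact: ltW | rewrite ler_norml].
rewrite mulr1 (le_trans (ler_normD _ _)) // normrM (gtr0_norm d0).
by move: lam_d; rewrite /d; lra.
Qed.

Lemma extreme_sign_sum x : extreme_point (brick es eps) x ->
  exists2 th, is_sign_seq th & x = sign_sum th.
Proof.
move=> x_ext; have [th th_sign th_x] := sign_seq_norm (es^~ x).
exists th => //; apply: norm_cvg_unique (es_expansion x) _.
suff -> : psum (es^~ x) e = psum (fun n => th n * eps n) e by exact: psum_sign_sum.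
apply/funext => N; apply: eq_bigr => n _.
by rewrite -(extreme_coord_norm x n x_ext) th_x.
Qed.

Lemma sign_psum_le t : (forall th, is_sign_seq th -> `|sign_sum th| <= t) ->
  forall th M, is_sign_seq th -> `|psum (fun n => th n * eps n) e M| <= t.
Proof.
move=> sign_le th M th_sign.
(* [th'] agrees with [th] before M and is opposite after, so the two sign
   sums average to the M-th partial sum. *)
pose th' n : R := if (n < M)%N then th n else - th n.
have th'_sign : is_sign_seq th'.
  move=> n; rewrite /th'; case: ifP => _; first exact: th_sign.
  by case: (th_sign n) => ->; [right | left; rewrite opprK].
set c := psum _ e M.
have sum_eq N : (M <= N)%N ->
    psum (fun n => th n * eps n) e N + psum (fun n => th' n * eps n) e N = 2 *: c.
  move=> MN; rewrite -psumD (psum_eq_ge _ _ _ MN) => [|n Mn]; last first.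
    by rewrite /th' ltnNge Mn /= mulNr addrN.
  rewrite -psumZ; apply: eq_big_nat => n /andP[_ nM].
  by rewrite /th' nM; congr (_ *: _); lra.
have sign_sumD : sign_sum th + sign_sum th' = 2 *: c.
  pose S N := psum (fun n => th n * eps n) e N + psum (fun n => th' n * eps n) e N.
  have to_sum : S @ \oo --> sign_sum th + sign_sum th'.
    by apply: cvgD; exact: psum_sign_sum.
  have to_c : S @ \oo --> 2 *: c.
    by apply: cvg_near_cst; exists M => // N; exact: sum_eq.
  exact: norm_cvg_unique to_sum to_c.
have : `|2 *: c| <= 2 * t.
  rewrite -sign_sumD (le_trans (ler_normD _ _)) // mulr2n mulrDl mul1r.
  by rewrite lerD // sign_le.
by rewrite normrZ ger0_norm //; lra.
Qed.

Lemma psum_update_convex (b : nat -> R) k M : `|b k| <= eps k ->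
  exists2 tau : R, 0 <= tau <= 1 &
    psum b e M = tau *: psum [eta b with k |-> eps k] e M
                 + (1 - tau) *: psum [eta b with k |-> - eps k] e M.
Proof.
rewrite ler_norml => /andP[bk_ge bk_le].
have [ek0|ek0] := eqVneq (eps k) 0.
  exists 1; first by rewrite ler01 lexx.
  rewrite subrr scale0r addr0 scale1r; apply: eq_bigr => n _ /=.
  by case: eqVneq => // ->; congr (_ *: _); lra.
have ek_gt0 : 0 < eps k by rewrite lt_neqAle eq_sym ek0 eps_ge0.
exists ((eps k + b k) / (2 * eps k)).
  by rewrite divr_ge0 ?ler_pdivrMr /=; lra.
rewrite -!psumZ -psumD; apply: eq_bigr => n _ /=; congr (_ *: _).
by case: eqVneq => [->|_]; [field; rewrite gt_eqF | ring].
Qed.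

Lemma brick_psum_le t M :
  (forall th, is_sign_seq th -> `|psum (fun n => th n * eps n) e M| <= t) ->
  forall b, (forall n, `|b n| <= eps n) -> `|psum b e M| <= t.
Proof.
move=> sign_le.
suff extreme_from k b : (forall n, `|b n| <= eps n) ->
    (forall n, (k <= n < M)%N -> `|b n| = eps n) -> `|psum b e M| <= t.
  by move=> b b_le; apply: (extreme_from M) => // n /andP[Mn]; rewrite ltnNge Mn.
(* Going from k.+1 to k, coordinate k is split into its two extreme values. *)
elim: k b => [|k IH] b b_le b_ext.
  have [th th_sign th_b] := sign_seq_norm b.
  suff -> : psum b e M = psum (fun n => th n * eps n) e M by exact: sign_le.
  by apply: eq_big_nat => n nM; rewrite -b_ext // th_b.
have [tau /andP[tau0 tau1] ->] := psum_update_convex _ _ M (b_le k).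
have upd_le c : `|c| = eps k -> forall n, `|[eta b with k |-> c] n| <= eps n.
  by move=> ck n /=; case: eqVneq => [->|_]; rewrite ?ck.
have upd_ext c : `|c| = eps k ->
    forall n, (k <= n < M)%N -> `|[eta b with k |-> c] n| = eps n.
  move=> ck n /andP[kn nM] /=; case: eqVneq => [->//|nk]; apply: b_ext.
  by rewrite nM andbT ltn_neqAle eq_sym nk.
have ek : `|eps k| = eps k by rewrite ger0_norm.
have ekN : `|- eps k| = eps k by rewrite normrN.
have := IH _ (upd_le _ ek) (upd_ext _ ek); have := IH _ (upd_le _ ekN) (upd_ext _ ekN).
move=> p2_le p1_le; rewrite (le_trans (ler_normD _ _)) // !normrZ (ger0_norm tau0).
by rewrite ger0_norm ?subr_ge0 //; nra.
Qed.

Lemma brick_norm_le t : (forall th, is_sign_seq th -> `|sign_sum th| <= t) ->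
  forall x, brick es eps x -> `|x| <= t.
Proof.
move=> sign_le x x_brick.
apply: (@cvgr_to_le _ \oo _ R (fun M => `|proj M x|)).
  by apply: cvg_norm; exact: es_expansion.
by near=> M; apply: (brick_psum_le _ _ (fun th => sign_psum_le _ sign_le th M)).
Unshelve. all: by end_near. Qed.

Lemma sign_sum_le_r_unc th : is_sign_seq th -> ((`|sign_sum th|)%:E <= r_unc e eps)%E.
Proof.
by move=> th_sign; rewrite -series_norm_sign //; apply: ereal_sup_ubound; exists th.
Qed.

Lemma r_unc_brick_fin : exists s : R, r_unc e eps = s%:E.
Proof.
have brick0 : brick es eps 0 by move=> n; rewrite coord0 normr0.
have /(@ex_bound _ _ _ _ _ (globally_properfilter brick0)) [M brickM] :=
  compact_bounded brick_compact.
have r_unc_ge0 : (0 <= r_unc e eps)%E.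
  by apply: le_trans (sign_sum_le_r_unc (fun=> 1) (fun=> or_introl erefl)).
have r_unc_leM : (r_unc e eps <= M%:E)%E.
  apply: ge_ereal_sup => _ [th th_sign <-].
  by rewrite series_norm_sign // lee_fin; apply/brickM/sign_sum_brick.
by move: r_unc_ge0 r_unc_leM; case: (r_unc e eps) => [s _ _|//|//]; exists s.
Qed.

Lemma r_ext_brick : r_ext (brick es eps) = r_unc e eps.
Proof.
rewrite /r_ext asboolT; last by exists (sign_sum (fun=> 1)); apply: sign_sum_extreme; left.
congr ereal_sup; apply/seteqP; split => y.
  move=> [x x_ext <-]; have [th th_sign ->] := extreme_sign_sum _ x_ext.
  by exists th; rewrite ?series_norm_sign.
move=> [th th_sign <-]; exists (sign_sum th); first exact: sign_sum_extreme.
by rewrite series_norm_sign.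
Qed.

Lemma sup_norm_brick : sup_norm (brick es eps) = r_unc e eps.
Proof.
have [s us] := r_unc_brick_fin; apply/le_anti/andP; split.
  apply: ge_ereal_sup => _ [x x_brick <-]; rewrite us lee_fin.
  by apply: brick_norm_le x_brick => th th_sign; rewrite -lee_fin -us sign_sum_le_r_unc.
apply: ge_ereal_sup => _ [th th_sign <-]; rewrite series_norm_sign //.
by apply: ereal_sup_ubound; exists (sign_sum th) => //; exact: sign_sum_brick.
Qed.

End SchauderBasis.

Theorem corollary3p8 (R : realType) (X : completeNormedModType R)
  (e : nat -> X) (es : nat -> X -> R) (eps : nat -> R) :
  schauder_basis e es -> normalized e ->
  (forall n, 0 <= eps n) ->
  compact (brick es eps) ->
  exists r : R,
    [/\ r_ext (brick es eps) = r%:E,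
        r_unc e eps = r%:E &
        sup_norm (brick es eps) = r%:E].
Proof.
move=> [expansion unique] e_norm eps_ge0 brick_compact.
have [s us] : exists s : R, r_unc e eps = s%:E by apply: r_unc_brick_fin.
exists s; split => //; rewrite -us; [exact: r_ext_brick | exact: sup_norm_brick].
Qed.
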